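(* Let $\mathcal H$ be a complex Hilbert space of finite dimension $d\ge 2$. There is no quasi-probability representation $(\mu,\xi)$ of quantum theory on $\mathcal H$ (over any finite set $\Lambda$) that is non-negative, i.e. such that $\mu_\rho(\lambda)\ge 0$ for all $\rho\in\mathcal D(\mathcal H)$, $\lambda\in\Lambda$ and $\xi_E(\lambda)\in[0,1]$ for all $E\in\mathcal E(\mathcal H)$, $\lambda\in\Lambda$. Equivalently, every quasi-probability representation of quantum theory has negativity in its representation of states or of measurements (or both).
   Context: $\mathcal D(\mathcal H)$ denotes the set of density operators (positive semidefinite, trace one) on $\mathcal H$, $\mathcal E(\mathcal H)$ the set of effects (operators $E$ with $0\le E\le\mathbb 1$). A quasi-probability representation of quantum theory over a finite set $\Lambda$ is a pair of affine maps $\mu:\mathcal D(\mathcal H)\to\mathbb R^\Lambda$, $\rho\mapsto\mu_\rho$, and $\xi:\mathcal E(\mathcal H)\to\mathbb R^\Lambda$, $E\mapsto\xi_E$, such that for all $\rho\in\mathcal D(\mathcal H)$ and $E\in\mathcal E(\mathcal H)$: (a) $\mu_\rho(\lambda)\in\mathbb R$ and $\sum_{\lambda}\mu_\rho(\lambda)=1$; (b) $\xi_E(\lambda)\in\mathbb R$ and $\xi_{\mathbb 1}(\lambda)=1$ for all $\lambda$; (c) $\mathrm{Tr}(\rho E)=\sum_{\lambda\in\Lambda}\mu_\rho(\lambda)\xi_E(\lambda)$. *)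

From HB Require Import structures.
From mathcomp Require Import all_boot all_order all_algebra.
Set Implicit Arguments. Unset Strict Implicit. Unset Printing Implicit Defensive.
Import Order.TTheory GRing.Theory Num.Theory.
Local Open Scope ring_scope.

(* The complex Hilbert space of dimension d is C^d (column vectors 'cV[C]_d),
   operators are d x d matrices over a numClosedFieldType C (e.g. the complex
   numbers); "real numbers" are the elements x of C with x \is Num.real. *)

Definition adjmx (C : numClosedFieldType) (m n : nat) (A : 'M[C]_(m, n)) : 'M[C]_(n, m) :=
  (map_mx Num.conj A)^T.

Definition psdmx (C : numClosedFieldType) (d : nat) (A : 'M[C]_d) : Prop :=
  adjmx A = A /\ forall v : 'cV[C]_d, 0 <= (adjmx v *m A *m v) 0 0.

Definition density (C : numClosedFieldType) (d : nat) (rho : 'M[C]_d) : Prop :=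
  psdmx rho /\ \tr rho = 1.

Definition effect (C : numClosedFieldType) (d : nat) (E : 'M[C]_d) : Prop :=
  psdmx E /\ psdmx (1%:M - E).

(* (mu, xi) is a quasi-probability representation of quantum theory on C^d over
   the finite set Lambda.  Only the values of mu on D(H) and of xi on E(H) matter. *)
Definition quasi_prob_rep (C : numClosedFieldType) (d : nat) (Lambda : finType)
    (mu : 'M[C]_d -> Lambda -> C) (xi : 'M[C]_d -> Lambda -> C) : Prop :=
  (forall (r1 r2 : 'M[C]_d) (p : C), density r1 -> density r2 -> 0 <= p <= 1 ->
     forall l, mu (p *: r1 + (1 - p) *: r2) l = p * mu r1 l + (1 - p) * mu r2 l) /\
  (forall (E1 E2 : 'M[C]_d) (p : C), effect E1 -> effect E2 -> 0 <= p <= 1 ->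
     forall l, xi (p *: E1 + (1 - p) *: E2) l = p * xi E1 l + (1 - p) * xi E2 l) /\
  (forall rho, density rho -> (forall l, mu rho l \is Num.real) /\ \sum_l mu rho l = 1) /\
  (forall E, effect E -> forall l, xi E l \is Num.real) /\
  (forall l, xi 1%:M l = 1) /\
  (forall rho E, density rho -> effect E -> \tr (rho *m E) = \sum_l mu rho l * xi E l).

Definition nonnegative_rep (C : numClosedFieldType) (d : nat) (Lambda : finType)
    (mu : 'M[C]_d -> Lambda -> C) (xi : 'M[C]_d -> Lambda -> C) : Prop :=
  (forall rho l, density rho -> 0 <= mu rho l) /\
  (forall E l, effect E -> 0 <= xi E l <= 1).

(** For a pure state [P] we have [tr (P P) = 1],
    so in a non-negative representation [sum_l mu_P(l) (1 - xi_P(l)) = 0] forces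
    [xi_P(l) = 1] on the support of [mu_P].  Hence two pure states whose
    distributions [mu] have the same support satisfy [tr (P Q) = 1], i.e. they
    coincide.  But the states on the rays [e_0 + t e_1] (t in N) are pairwise
    distinct, while there are only finitely many possible supports. *)

From HB Require Import structures.
From mathcomp Require Import all_boot all_order all_algebra zify.
Set Implicit Arguments. Unset Strict Implicit. Unset Printing Implicit Defensive.
Import Order.TTheory GRing.Theory Num.Theory.
Local Open Scope ring_scope.

Section Adjoint.
Variable C : numClosedFieldType.

Lemma adjmxM (m n p : nat) (A : 'M[C]_(m, n)) (B : 'M[C]_(n, p)) :
  adjmx (A *m B) = adjmx B *m adjmx A.
Proof. by rewrite /adjmx map_mxM trmx_mul. Qed.

Lemma adjmxK (m n : nat) (A : 'M[C]_(m, n)) : adjmx (adjmx A) = A.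
Proof. by apply/matrixP => i j; rewrite !mxE conjCK. Qed.

Lemma adjmxB (m n : nat) (A B : 'M[C]_(m, n)) : adjmx (A - B) = adjmx A - adjmx B.
Proof. by apply/matrixP => i j; rewrite !mxE rmorphB. Qed.

Lemma adjmxZ (m n : nat) (c : C) (A : 'M[C]_(m, n)) : adjmx (c *: A) = c^* *: adjmx A.
Proof. by apply/matrixP => i j; rewrite !mxE rmorphM. Qed.

Lemma adjmx1 (n : nat) : adjmx (1%:M : 'M[C]_n) = 1%:M.
Proof. by apply/matrixP => i j; rewrite !mxE rmorph_nat eq_sym. Qed.

End Adjoint.

Section PureStates.
Variables (C : numClosedFieldType) (d : nat).

Lemma psdmx_gram (k : nat) (M : 'M[C]_(d, k)) : psdmx (M *m adjmx M).
Proof.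
split; first by rewrite adjmxM adjmxK.
move=> v; have -> : adjmx v *m (M *m adjmx M) *m v
                    = adjmx (adjmx M *m v) *m (adjmx M *m v).
  by rewrite adjmxM adjmxK !mulmxA.
rewrite mxE; apply: sumr_ge0 => i _; rewrite !mxE mulrC; exact: mul_conjC_ge0.
Qed.

Lemma psdmxZ (c : C) (A : 'M[C]_d) : 0 <= c -> psdmx A -> psdmx (c *: A).
Proof.
move=> c_ge0 [A_herm A_psd]; split.
  by rewrite adjmxZ A_herm conj_Creal // ger0_real.
by move=> v; rewrite -scalemxAr -scalemxAl mxE mulr_ge0.
Qed.

Lemma effect_projection (P : 'M[C]_d) :
  psdmx P -> P *m P = P -> effect P.
Proof.
move=> [P_herm P_psd] PP; split => //.
have -> : 1%:M - P = (1%:M - P) *m adjmx (1%:M - P).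
  by rewrite adjmxB adjmx1 P_herm mulmxBl !mulmxBr !mul1mx mulmx1 PP subrr subr0.
exact: psdmx_gram.
Qed.

Section RankOneProjection.
Variables (w : 'cV[C]_d) (n : C).
Hypotheses (w_norm : adjmx w *m w = n%:M) (n_gt0 : 0 < n).

Definition rank1_proj : 'M[C]_d := n^-1 *: (w *m adjmx w).

Lemma rank1_proj_idem : rank1_proj *m rank1_proj = rank1_proj.
Proof.
rewrite /rank1_proj -scalemxAl -scalemxAr scalerA -mulmxA (mulmxA (adjmx w)).
by rewrite w_norm mul_scalar_mx -scalemxAr scalerA divfK // gt_eqF.
Qed.

Lemma rank1_proj_density : density rank1_proj.
Proof.
split; first by apply: psdmxZ; [rewrite invr_ge0 ltW | apply: psdmx_gram].
by rewrite mxtraceZ mxtrace_mulC w_norm mxtrace_scalar mulr1n mulVf // gt_eqF.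
Qed.

Lemma rank1_proj_effect : effect rank1_proj.
Proof. exact: effect_projection (proj1 rank1_proj_density) rank1_proj_idem. Qed.

Lemma rank1_proj_pure : \tr (rank1_proj *m rank1_proj) = 1.
Proof. by rewrite rank1_proj_idem; case: rank1_proj_density. Qed.

End RankOneProjection.

Section Rays.
Variables (i0 i1 : 'I_d).
Hypothesis i01 : i0 != i1.

Definition ray (t : nat) : 'cV[C]_d :=
  \col_i (if i == i0 then 1 else if i == i1 then t%:R else 0).

Lemma ray_inner (s t : nat) : adjmx (ray s) *m ray t = (1 + s * t)%N%:R%:M.
Proof.
rewrite [LHS]mx11_scalar mxE (bigD1 i0) //= (bigD1 i1) 1?eq_sym //=.
rewrite big1 => [|j /andP [j_ne1 j_ne0]]; last first.
  by rewrite !mxE (negbTE j_ne0) (negbTE j_ne1) mulr0.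
by rewrite !mxE eqxx eq_sym (negbTE i01) eqxx rmorph1 rmorph_nat mul1r addr0 natrD natrM.
Qed.

Lemma ray_norm_gt0 (t : nat) : 0 < (1 + t * t)%N%:R :> C.
Proof. by rewrite ltr0n add1n. Qed.

Definition ray_state (t : nat) : 'M[C]_d := rank1_proj (ray t) (1 + t * t)%N%:R.

Lemma ray_state_density (t : nat) : density (ray_state t).
Proof. exact: rank1_proj_density (ray_inner t t) (ray_norm_gt0 t). Qed.

Lemma ray_state_effect (t : nat) : effect (ray_state t).
Proof. exact: rank1_proj_effect (ray_inner t t) (ray_norm_gt0 t). Qed.

Lemma ray_state_pure (t : nat) : \tr (ray_state t *m ray_state t) = 1.
Proof. exact: rank1_proj_pure (ray_inner t t) (ray_norm_gt0 t). Qed.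

Lemma tr_ray_state (s t : nat) :
  \tr (ray_state s *m ray_state t) =
  ((1 + s * t) ^ 2)%N%:R / ((1 + s * s) * (1 + t * t))%N%:R.
Proof.
rewrite /ray_state /rank1_proj -scalemxAl -scalemxAr scalerA mxtraceZ.
rewrite -mulmxA (mulmxA (adjmx (ray s))) ray_inner mul_scalar_mx -scalemxAr.
rewrite mxtraceZ mxtrace_mulC ray_inner mxtrace_scalar mulr1n (mulnC t s).
by rewrite natrM invfM natrX expr2 mulrC.
Qed.

Lemma ray_state_overlap_eq1 (s t : nat) :
  \tr (ray_state s *m ray_state t) = 1 -> s = t.
Proof.
have den_neq0 : ((1 + s * s) * (1 + t * t))%N%:R != 0 :> C.
  by rewrite pnatr_eq0 muln_eq0 negb_or !add1n.
rewrite tr_ray_state => /eqP.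
by rewrite (can2_eq (mulfVK den_neq0) (mulfK den_neq0)) mul1r eqr_nat => /eqP; nia.
Qed.

End Rays.
End PureStates.

Section NonNegativeRepresentation.
Variables (C : numClosedFieldType) (d : nat) (Lambda : finType).
Variables (mu xi : 'M[C]_d -> Lambda -> C).
Hypothesis mu_sum1 : forall rho, density rho -> \sum_l mu rho l = 1.
Hypothesis born_rule : forall rho E, density rho -> effect E ->
  \tr (rho *m E) = \sum_l mu rho l * xi E l.
Hypothesis mu_ge0 : forall rho l, density rho -> 0 <= mu rho l.
Hypothesis xi_le1 : forall E l, effect E -> xi E l <= 1.

Lemma pure_xi_eq1 (P : 'M[C]_d) (l : Lambda) :
  density P -> effect P -> \tr (P *m P) = 1 -> 0 < mu P l -> xi P l = 1.
Proof.
move=> PD PE P_pure mu_gt0.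
have defect_ge0 l' : 0 <= mu P l' * (1 - xi P l').
  by rewrite mulr_ge0 ?mu_ge0 // subr_ge0 xi_le1.
have defect_sum0 : \sum_l' mu P l' * (1 - xi P l') = 0.
  under eq_bigr do rewrite mulrBr mulr1.
  by rewrite sumrB -born_rule // P_pure mu_sum1 // subrr.
have /eqP := @psumr_eq0P _ _ _ _ (fun l' _ => defect_ge0 l') defect_sum0 l isT.
by rewrite mulf_eq0 (gt_eqF mu_gt0) subr_eq0 => /eqP.
Qed.

Lemma born_eq1_of_support_sub (P Q : 'M[C]_d) :
  density P -> density Q -> effect Q -> \tr (Q *m Q) = 1 ->
  (forall l, 0 < mu P l -> 0 < mu Q l) -> \tr (P *m Q) = 1.
Proof.
move=> PD QD QE Q_pure supp_sub.
rewrite born_rule // -(mu_sum1 PD); apply: eq_bigr => l _.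
have : 0 <= mu P l by exact: mu_ge0.
rewrite le0r => /orP [/eqP -> | mu_gt0]; first by rewrite mul0r.
by rewrite pure_xi_eq1 ?mulr1 ?supp_sub.
Qed.

End NonNegativeRepresentation.

Theorem theorem2 (C : numClosedFieldType) (d : nat) (hd : (2 <= d)%N)
    (Lambda : finType) (mu : 'M[C]_d -> Lambda -> C) (xi : 'M[C]_d -> Lambda -> C) :
  quasi_prob_rep mu xi -> ~ nonnegative_rep mu xi.
Proof.
move=> [_ [_ [mu_norm [_ [_ born_rule]]]]] [mu_ge0 xi_01].
have mu_sum1 rho : density rho -> \sum_l mu rho l = 1 by case/mu_norm.
have xi_le1 E l : effect E -> xi E l <= 1 by move=> /(xi_01 _ l)/andP [].
pose i0 : 'I_d := Ordinal (ltnW hd); pose i1 : 'I_d := Ordinal hd.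
pose P := ray_state C i0 i1.
pose support (t : 'I_#|{set Lambda}|.+1) := [set l | 0 < mu (P t) l].
have /injectivePn [s [t s_ne_t same_support]] : ~~ injectiveb support.
  by apply/injectiveP => /leq_card; rewrite card_ord ltnn.
apply/negP: s_ne_t; rewrite negbK -val_eqE; apply/eqP.
apply: (ray_state_overlap_eq1 (i0 := i0) (i1 := i1)) => //.
apply: (born_eq1_of_support_sub mu_sum1 born_rule) => //;
  [exact: ray_state_density | exact: ray_state_density |
   exact: ray_state_effect | exact: ray_state_pure |].
move=> l mu_gt0; have : l \in support s by rewrite inE.
by rewrite same_support inE.
Qed.
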